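(* Let $g\geq 3$, $d=2g+1$ and $h=\lfloor\log_2(g+1)+1\rfloor$. Let $r\geq 1$ and let $\mathbf k={}^t(k_1,\dots,k_d)\in\mathbf K_r$. Then $s(\mathbf k)\geq\lceil s(r)/h\rceil$. If moreover $s(\mathbf k)=s(r)/h$, then: 1) every entry $\dot k_{\ell,v}$ ($1\le\ell\le d$, $v\ge0$) of the $2$-adic box of $\mathbf k$ is $0$ or $1$; 2) exactly $s(r)/h$ of the entries $\dot k_{1,v}$ ($v\geq 0$) are equal to $1$ and the others are $0$; 3) for every $v\geq 0$, $s\big(\sum_{\ell=1}^d\dot k_{\ell,v}\big)$ equals $0$ or $h$.
   Context: For a nonnegative integer $m$, $s(m)$ is the sum of the binary digits of $m$. For $r\ge0$, $\mathbf K_r=\{{}^t(k_1,\dots,k_d)\in\mathbb Z^d: k_1\geq k_2\geq\cdots\geq k_d\geq 0,\ \sum_{\ell=1}^d k_\ell=r\}$. For $\mathbf k\in\mathbf K_r$ put $s(\mathbf k)=s(k_1-k_2)+s(k_2-k_3)+\cdots+s(k_{d-1}-k_d)+s(k_d)$. The dot representation (2-adic box) of $\mathbf k$ is the array of integers $\dot k_{\ell,v}$ ($1\le \ell\le d$, $v\ge 0$) defined by: $\dot k_{d,v}$ is the $2^v$-coefficient of the binary expansion of $k_d$; and for $1<\ell\le d$, $\dot k_{\ell-1,v}=\dot k_{\ell,v}+(\text{the }2^v\text{-coefficient of the binary expansion of }k_{\ell-1}-k_\ell)$. Then $k_\ell=\sum_v\dot k_{\ell,v}2^v$ and $s(\mathbf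 k)=\sum_v \dot k_{1,v}$. *)

From mathcomp Require Import all_boot.
Set Implicit Arguments. Unset Strict Implicit. Unset Printing Implicit Defensive.

Definition bdigit (m v : nat) : nat := odd (m %/ 2 ^ v).

(* s(m): sum of binary digits of m.  Digits of index >= m vanish since m < 2^m. *)
Definition s (m : nat) : nat := \sum_(v < m) bdigit m v.

(* A vector k = t(k_1,...,k_d) is represented by k : nat -> nat, only the values
   at 1..d mattering; kext d k extends it by k_l = 0 for l > d (so k_{d+1} = 0). *)
Definition kext (d : nat) (k : nat -> nat) (l : nat) : nat :=
  if l <= d then k l else 0.

Definition inK (d r : nat) (k : nat -> nat) : Prop :=
  (forall l, 1 <= l < d -> k l.+1 <= k l) /\ \sum_(1 <= l < d.+1) k l = r.

Definition sk (d : nat) (k : nat -> nat) : nat :=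
  \sum_(1 <= l < d.+1) s (kext d k l - kext d k l.+1).

(* dot representation: dot_{d,v} = digit of k_d, and
   dot_{l-1,v} = dot_{l,v} + digit of (k_{l-1} - k_l); unfolded:
   dot_{l,v} = sum_{j=l}^{d} digit_v (k_j - k_{j+1}) with k_{d+1} = 0. *)
Definition kdot (d : nat) (k : nat -> nat) (l v : nat) : nat :=
  \sum_(l <= j < d.+1) bdigit (kext d k j - kext d k j.+1) v.

From mathcomp Require Import all_boot zify.

(* Reading the 2-adic box column by column, k_l = sum_v 2^v kdot_{l,v}, hence
   r = sum_v 2^v T_v with T_v = sum_l kdot_{l,v} = sum_j j * digit_v(k_j - k_{j+1}).
   Since s is subadditive, s(r) <= sum_v s(T_v), and s(T_v) <= h * kdot_{1,v}
   because every j <= d = 2g+1 < 2^(h+1) - 1 has s(j) <= h; summing over v gives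
   s(r) <= h * s(k).  In the equality case all these inequalities are equalities,
   so s(T_v) = h * kdot_{1,v}; as T_v <= d * kdot_{1,v} < 2^(h + kdot_{1,v}), this
   forces kdot_{1,v} <= 1, and the three claims follow. *)

Set Implicit Arguments.
Unset Strict Implicit.
Unset Printing Implicit Defensive.

Lemma bdigit_small m v : m < 2 ^ v -> bdigit m v = 0.
Proof. by move=> lt_m; rewrite /bdigit divn_small. Qed.

Lemma bdigit0 m : bdigit m 0 = odd m.
Proof. by rewrite /bdigit expn0 divn1. Qed.

Lemma bdigitS m v : bdigit m v.+1 = bdigit m./2 v.
Proof. by rewrite /bdigit expnS divnMA divn2. Qed.

Lemma binary_expansion N m : m < 2 ^ N -> m = \sum_(0 <= v < N) 2 ^ v * bdigit m v.
Proof.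
elim: N m => [|N IH] m lt_m.
  by move: lt_m; rewrite expn0 ltnS leqn0 => /eqP->; rewrite big_geq.
rewrite big_nat_recl // bdigit0 mul1n.
under eq_bigr do rewrite bdigitS expnS -mulnA.
rewrite -big_distrr /= -IH; first by rewrite -{1}(odd_double_half m) -mul2n.
by rewrite expnS in lt_m; lia.
Qed.

Lemma sum_bdigit_widen m N N' : m < 2 ^ N -> N <= N' ->
  \sum_(0 <= v < N') bdigit m v = \sum_(0 <= v < N) bdigit m v.
Proof.
move=> lt_m le_N; rewrite (big_cat_nat (leq0n N) le_N) /=.
rewrite [X in _ + X]big1_seq ?addn0 // => v /andP[_].
rewrite mem_index_iota => /andP[le_Nv _].
by apply: bdigit_small; rewrite (leq_trans lt_m) // leq_exp2l.
Qed.

Lemma s_sum_bdigit N m : m < 2 ^ N -> s m = \sum_(0 <= v < N) bdigit m v.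
Proof.
move=> lt_m; rewrite /s -(big_mkord xpredT) -(@sum_bdigit_widen m m (maxn m N)).
- exact: sum_bdigit_widen (leq_maxr _ _).
- exact: ltn_expl.
- exact: leq_maxl.
Qed.

Lemma s0 : s 0 = 0.
Proof. by rewrite /s big_ord0. Qed.

Lemma s_bool (b : bool) : s b = b.
Proof. by case: b; rewrite /s ?big_ord0 ?big_ord1. Qed.

Lemma s_odd_half m : s m = odd m + s m./2.
Proof.
have lt_m : m < 2 ^ m.+1 by rewrite ltnW // ltn_expl.
have lt_half : m./2 < 2 ^ m by apply: leq_ltn_trans (ltn_expl _ _) => //; lia.
rewrite (s_sum_bdigit lt_m) (s_sum_bdigit lt_half) big_nat_recl // bdigit0.
by under eq_bigr do rewrite bdigitS.
Qed.

Lemma s_double m : s m.*2 = s m.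
Proof. by rewrite s_odd_half odd_double doubleK. Qed.

Lemma s_mul_exp2 v m : s (2 ^ v * m) = s m.
Proof. by elim: v => [|v IH]; rewrite ?mul1n // expnS -mulnA mul2n s_double. Qed.

Lemma s_addn a b : s (a + b) <= s a + s b.
Proof.
have [n] := ubnP (a + b); elim: n a b => // n IH a b lt_ab.
have [->|a_gt0] := posnP a; first by rewrite s0.
rewrite s_odd_half halfD oddD (s_odd_half a) (s_odd_half b).
set c := odd a && odd b.
have half_lt : c + (a./2 + b./2) < n by rewrite -halfD; lia.
have le_a : s (c + (a./2 + b./2)) <= s a./2 + s (c + b./2).
  by rewrite addnCA; apply: IH; rewrite -addnCA.
have le_c : s (c + b./2) <= c + s b./2 by rewrite -{2}(s_bool c); apply: IH; lia.
have parity : odd a (+) odd b + 2 * c = odd a + odd b by rewrite /c; case: (odd a); case: (odd b).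
lia.
Qed.

Lemma s_sum (I : Type) (r : seq I) (P : pred I) (F : I -> nat) :
  s (\sum_(i <- r | P i) F i) <= \sum_(i <- r | P i) s (F i).
Proof.
apply: (big_ind2 (fun x y => s x <= y)) => [|x1 x2 y1 y2 le1 le2|//]; first by rewrite s0.
exact: leq_trans (s_addn _ _) (leq_add le1 le2).
Qed.

Lemma s_ub_exp2 n m : m < 2 ^ n -> s m <= n.
Proof.
elim: n m => [|n IH] m lt_m; first by move: lt_m; rewrite expn0 ltnS leqn0 => /eqP->; rewrite s0.
rewrite s_odd_half; have := IH m./2; rewrite expnS in lt_m.
case: (odd m) => /=; lia.
Qed.

Lemma s_ub_exp2_pred n m : m.+1 < 2 ^ n.+1 -> s m <= n.
Proof.
elim: n m => [|n IH] m lt_m; first by rewrite expn1 in lt_m; rewrite (_ : m = 0) ?s0 //; lia.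
rewrite s_odd_half expnS in lt_m *; case: (boolP (odd m)) => [odd_m|even_m] /=.
  by rewrite add1n ltnS IH //; move: lt_m; rewrite -{1}(odd_double_half m) odd_m; lia.
by rewrite add0n s_ub_exp2 //; move: lt_m; rewrite -{1}(odd_double_half m) (negbTE even_m); lia.
Qed.

Lemma s_ub_mul T D c h : T <= D * c -> D < 2 ^ h.+1 -> s T <= h + c.
Proof.
move=> le_T lt_D; have [c0|c_gt0] := posnP c.
  by move: le_T; rewrite c0 muln0 leqn0 => /eqP->; rewrite s0.
apply: s_ub_exp2.
have le_c : c <= 2 ^ c.-1 by rewrite -{1}(prednK c_gt0) ltn_expl.
apply: leq_ltn_trans le_T (leq_trans (_ : _ < 2 ^ h.+1 * c) _); first by rewrite ltn_pmul2r.
by rewrite -[in X in _ <= X](prednK c_gt0) addnS -addSn expnD leq_mul2l le_c orbT.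
Qed.

Lemma leq_sum_nat_term (F : nat -> nat) a b j : a <= j < b -> F j <= \sum_(a <= i < b) F i.
Proof. by move=> j_in; rewrite (bigD1_seq j) ?mem_index_iota ?iota_uniq //= leq_addr. Qed.

Lemma sum_suffix_sums (b : nat -> nat) n :
  \sum_(1 <= l < n.+1) \sum_(l <= j < n.+1) b j = \sum_(1 <= j < n.+1) j * b j.
Proof.
elim: n => [|n IH]; first by rewrite !big_geq.
rewrite [RHS]big_nat_recr //= -IH.
rewrite (eq_big_nat _ _ (F2 := fun l => \sum_(l <= j < n.+1) b j + b n.+1)); last first.
  by move=> l /andP[_ le_l]; rewrite big_nat_recr.
rewrite big_split /= big_nat_recr //= [X in _ + X + _]big_geq // addn0.
by rewrite sum_nat_const_nat subn1.
Qed.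

Lemma telescope_sumn_noninc (f : nat -> nat) a b : a <= b ->
  (forall i, a <= i < b -> f i.+1 <= f i) -> \sum_(a <= i < b) (f i - f i.+1) + f b = f a.
Proof.
elim: b => [|b IH] le_ab f_noninc; first by move: le_ab; rewrite leqn0 => /eqP->; rewrite big_geq.
case: (ltngtP a b.+1) le_ab => // [lt_ab _|-> _]; last by rewrite big_geq.
rewrite big_nat_recr //= -addnA subnK; last by apply: f_noninc; lia.
by apply: IH => // i i_in; apply: f_noninc; lia.
Qed.

Lemma eq_in_leq_sum (I : eqType) (r : seq I) (F G : I -> nat) :
  (forall i, i \in r -> F i <= G i) -> \sum_(i <- r) G i <= \sum_(i <- r) F i ->
  {in r, F =1 G}.
Proof.
move=> le_FG le_sum.
have : \sum_(i <- r | i \in r) (G i - F i) == 0 by rewrite sumnB // -!big_seq subn_eq0.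
rewrite sum_nat_seq_eq0 => /allP all0 i r_i.
by apply/eqP; rewrite eqn_leq le_FG // -subn_eq0 (implyP (all0 i r_i)).
Qed.

Lemma exists_support_seq (c : nat -> nat) N :
  (forall v, c v <= 1) -> (forall v, N <= v -> c v = 0) ->
  exists S : seq nat, uniq S /\ size S = \sum_(0 <= v < N) c v /\ forall v, c v = (v \in S).
Proof.
move=> c_le1 c_ge; have c_bool v : c v = (c v == 1) by case: (c v) (c_le1 v) => [|[|]].
exists [seq v <- iota 0 N | c v == 1]; split; first by rewrite filter_uniq ?iota_uniq.
split.
  rewrite size_filter -sum1_count big_mkcond /index_iota subn0.
  by apply: eq_bigr => v _; rewrite [RHS]c_bool; case: eqP.
move=> v; rewrite mem_filter mem_iota add0n /=; case: (ltnP v N) => [_|le_Nv].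
  by rewrite andbT -c_bool.
by rewrite andbF c_ge.
Qed.

Definition kdiff (d : nat) (k : nat -> nat) (j : nat) : nat := kext d k j - kext d k j.+1.

Definition colsum (d : nat) (k : nat -> nat) (v : nat) : nat :=
  \sum_(1 <= l < d.+1) kdot d k l v.

Section DotRepresentation.

Variables (d N : nat) (k : nat -> nat).
Hypothesis k_noninc : forall l, 1 <= l < d -> k l.+1 <= k l.
Hypothesis kext_lt : forall l, 0 < l -> kext d k l < 2 ^ N.

Lemma kext_noninc l : 0 < l -> kext d k l.+1 <= kext d k l.
Proof.
rewrite /kext => l_gt0; case: (ltnP l d) => [lt_ld|//].
by rewrite (ltnW lt_ld); apply: k_noninc; rewrite l_gt0.
Qed.

Lemma kdiff_lt j : 0 < j -> kdiff d k j < 2 ^ N.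
Proof. by move=> j_gt0; rewrite /kdiff (leq_ltn_trans (leq_subr _ _) (kext_lt j_gt0)). Qed.

Lemma kdot_ge l v : 0 < l -> N <= v -> kdot d k l v = 0.
Proof.
move=> l_gt0 le_Nv; rewrite /kdot big_nat_cond big1 // => j /andP[/andP[le_lj _] _].
apply: bdigit_small; apply: leq_trans (kdiff_lt (leq_trans l_gt0 le_lj)) _.
by rewrite leq_exp2l.
Qed.

Lemma kext_binary l : 0 < l -> kext d k l = \sum_(0 <= v < N) 2 ^ v * kdot d k l v.
Proof.
move=> l_gt0; under eq_bigr do rewrite /kdot big_distrr /=.
rewrite exchange_big_nat /= big_nat_cond.
rewrite (eq_bigr (kdiff d k)) => [|j /andP[/andP[le_lj _] _]]; last first.
  by rewrite -binary_expansion // kdiff_lt // (leq_trans l_gt0).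
rewrite -big_nat_cond; case: (leqP l d.+1) => [le_l|lt_l].
  rewrite -[LHS](@telescope_sumn_noninc (kext d k) l d.+1) // => [|i /andP[le_li _]].
    by rewrite /kext ltnn addn0.
  exact: kext_noninc (leq_trans l_gt0 le_li).
by rewrite big_geq ?(ltnW lt_l) // /kext leqNgt (ltnW lt_l).
Qed.

Lemma sum_k_colsum : \sum_(1 <= l < d.+1) k l = \sum_(0 <= v < N) 2 ^ v * colsum d k v.
Proof.
rewrite (eq_big_nat _ _ (F2 := fun l => \sum_(0 <= v < N) 2 ^ v * kdot d k l v)).
  by rewrite exchange_big_nat; apply: eq_bigr => v _; rewrite big_distrr.
by move=> l /andP[l_gt0 le_l]; rewrite -kext_binary // /kext -ltnS le_l.
Qed.

Lemma sk_sum_kdot1 : sk d k = \sum_(0 <= v < N) kdot d k 1 v.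
Proof.
rewrite /sk /kdot exchange_big_nat big_nat_cond [RHS]big_nat_cond.
by apply: eq_bigr => j /andP[/andP[j_gt0 _] _]; apply: s_sum_bdigit; apply: kdiff_lt.
Qed.

Lemma kdot_le l l' v : l <= l' -> kdot d k l' v <= kdot d k l v.
Proof.
move=> le_ll'; case: (leqP l' d.+1) => [le_l' | lt_l']; last by rewrite /kdot big_geq // ltnW.
by rewrite /kdot (big_cat_nat le_ll' le_l') leq_addl.
Qed.

Lemma colsum_weighted v : colsum d k v = \sum_(1 <= j < d.+1) j * bdigit (kdiff d k j) v.
Proof. exact: sum_suffix_sums. Qed.

Lemma colsum_le v : colsum d k v <= d * kdot d k 1 v.
Proof.
rewrite colsum_weighted /kdot big_distrr big_nat_cond [X in _ <= X]big_nat_cond.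
by apply: leq_sum => j /andP[/andP[_ lt_j] _]; rewrite leq_mul2r -ltnS lt_j orbT.
Qed.

Lemma kdot1_le1 h v : d < 2 ^ h.+1 -> 2 < h -> s (colsum d k v) = h * kdot d k 1 v ->
  kdot d k 1 v <= 1.
Proof.
(* h * c <= h + c forces c <= 1 only when h >= 3: this is where g >= 3 is used. *)
move=> lt_d h_gt2 eq_s; have := s_ub_mul (colsum_le v) lt_d; rewrite eq_s; nia.
Qed.

Lemma s_sum_k_le : s (\sum_(1 <= l < d.+1) k l) <= \sum_(0 <= v < N) s (colsum d k v).
Proof.
rewrite sum_k_colsum; apply: leq_trans (s_sum _ _ _) _.
by apply: leq_sum => v _; rewrite s_mul_exp2.
Qed.

Section DigitSums.

Variable h : nat.
Hypothesis s_le_h : forall j, 0 < j <= d -> s j <= h.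

Lemma s_colsum_le v : s (colsum d k v) <= h * kdot d k 1 v.
Proof.
rewrite colsum_weighted /kdot big_distrr; apply: leq_trans (s_sum _ _ _) _.
rewrite big_nat_cond [X in _ <= X]big_nat_cond; apply: leq_sum => j /andP[/andP[j_gt0 lt_j] _].
rewrite /bdigit; case: odd => /=; rewrite ?muln1 ?muln0 ?s0 //.
by apply: s_le_h; rewrite j_gt0 -ltnS.
Qed.

Lemma sum_s_colsum_le : \sum_(0 <= v < N) s (colsum d k v) <= h * sk d k.
Proof. by rewrite sk_sum_kdot1 big_distrr; apply: leq_sum => v _; apply: s_colsum_le. Qed.

Lemma s_colsum_eq : h * sk d k <= s (\sum_(1 <= l < d.+1) k l) ->
  forall v, s (colsum d k v) = h * kdot d k 1 v.
Proof.
move=> le_sk v; have [lt_vN|le_Nv] := ltnP v N; last first.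
  rewrite kdot_ge // muln0 /colsum big_nat_cond big1 ?s0 // => l /andP[/andP[l_gt0 _] _].
  exact: kdot_ge.
apply: (eq_in_leq_sum (r := index_iota 0 N) (F := fun v => s (colsum d k v))
                      (G := fun v => h * kdot d k 1 v)) => [u _||].
- exact: s_colsum_le.
- by rewrite -big_distrr -sk_sum_kdot1 (leq_trans le_sk) // s_sum_k_le.
- by rewrite mem_index_iota.
Qed.

End DigitSums.

End DotRepresentation.

Theorem lemma2p2 (g r : nat) (k : nat -> nat) :
  3 <= g -> 1 <= r -> inK (2 * g + 1) r k ->
  let d := 2 * g + 1 in
  let h := (trunc_log 2 (g + 1)).+1 in
  (s r + h.-1) %/ h <= sk d k /\
  (h * sk d k = s r ->
     (forall l v, 1 <= l <= d -> kdot d k l v <= 1) /\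
     (exists S : seq nat, uniq S /\ size S = s r %/ h /\
        forall v, kdot d k 1 v = (v \in S)) /\
     (forall v, s (\sum_(1 <= l < d.+1) kdot d k l v) = 0 \/
                s (\sum_(1 <= l < d.+1) kdot d k l v) = h)).
Proof.
move=> g_ge3 _ [k_noninc sum_k] d h.
have lt_g : g + 1 < 2 ^ h by exact: trunc_log_ltn.
have h_gt2 : 2 < h by rewrite ltnS trunc_log_max // expnS expn1; lia.
have lt_d : d < 2 ^ h.+1 by rewrite expnS; lia.
have s_le_h j : 0 < j <= d -> s j <= h.
  by move=> /andP[_ le_j]; apply: s_ub_exp2_pred; rewrite expnS; lia.
have kext_lt l : 0 < l -> kext d k l < 2 ^ r.
  move=> l_gt0; apply: leq_ltn_trans (ltn_expl _ (isT : 1 < 2)); rewrite /kext.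
  by case: ifP => // le_l; rewrite -sum_k leq_sum_nat_term // l_gt0 ltnS.
have := leq_trans (s_sum_k_le k_noninc kext_lt) (sum_s_colsum_le kext_lt s_le_h).
rewrite sum_k => le_sr; split; first by rewrite -ltnS ltn_divLR //; nia.
move=> eq_sk; have le_sk : h * sk d k <= s (\sum_(1 <= l < d.+1) k l) by rewrite sum_k eq_sk.
have s_colsum := s_colsum_eq k_noninc kext_lt s_le_h le_sk.
have le1_kdot1 v : kdot d k 1 v <= 1 := kdot1_le1 lt_d h_gt2 (s_colsum v).
split; [|split].
- by move=> l v /andP[l_gt0 _]; apply: leq_trans (kdot_le d k v l_gt0) (le1_kdot1 v).
- have kdot1_ge v : r <= v -> kdot d k 1 v = 0 := kdot_ge kext_lt (ltnSn 0).
  have [S [uniq_S [size_S mem_S]]] := exists_support_seq le1_kdot1 kdot1_ge.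
  by exists S; rewrite size_S -(sk_sum_kdot1 kext_lt) -eq_sk mulKn.
- move=> v; rewrite -/(colsum d k v) s_colsum.
  by case: (kdot d k 1 v) (le1_kdot1 v) => [|[|]] // _; [left|right]; rewrite ?muln0 ?muln1.
Qed.
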